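(* Let $n\ge2$, let $x_1,\dots,x_n$ be commuting indeterminates over $\mathbb{K}=\mathbb{C}(q)$, and for $k\ge0$ let $\mathrm{Ch}_{n,k}=\sum_{i=1}^n x_i^k\prod_{j\ne i,\,1\le j\le n}\frac{qx_i-q^{-1}x_j}{x_i-x_j}$. For $k\ge1$ and $1\le i\le \min(k,n)$ let $\lambda^i_k=(k-i+1)\epsilon_1+\epsilon_2+\cdots+\epsilon_i$ (the partition $(k-i+1,1^{i-1})$), and let $\mathrm{Ch}\,L_{\lambda^i_k}$ denote the character of the irreducible $\mathfrak{gl}_n$-module of highest weight $\lambda^i_k$, written in the variables $x_j=e^{\epsilon_j}$ (i.e. the Schur polynomial $s_{(k-i+1,1^{i-1})}(x_1,\dots,x_n)$); set $\mathrm{Ch}\,L_{\lambda^i_k}=0$ if $i>k$. Then for every $k=1,2,\dots$, $\sum_{i=1}^n(-1)^{i-1}q^{n-2i+1}\,\mathrm{Ch}\,L_{\lambda^i_k}=\mathrm{Ch}_{n,k}$.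
   Context: By the Weyl character formula, $\mathrm{Ch}\,L_{\lambda}=\frac{\sum_{w\in S_n}\mathrm{sign}(w)e^{w(\lambda+\tilde\rho)}}{\prod_{i<j}(e^{\epsilon_i}-e^{\epsilon_j})}$ with $\tilde\rho=\sum_{i=1}^n(n-i)\epsilon_i$, where the symmetric group $S_n$ permutes the $\epsilon_i$ and $e^{\sum a_i\epsilon_i}=\prod x_i^{a_i}$. *)

From HB Require Import structures.
From mathcomp Require Import all_boot all_order all_algebra all_fingroup all_field.
From mathcomp Require Import fraction mpoly.
Set Implicit Arguments. Unset Strict Implicit. Unset Printing Implicit Defensive.
Import Order.TTheory GRing.Theory Num.Theory.
Local Open Scope ring_scope.

(* The base field K = C(q): rational functions in q over (algebraic) complex numbers. *)
Definition KK : fieldType := {fraction {poly algC}}.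
Definition qK : KK := @FracField.tofrac {poly algC} 'X.

Definition RF (n : nat) : fieldType := {fraction {mpoly KK[n]}}.
Definition xF (n : nat) (i : 'I_n) : RF n := @FracField.tofrac {mpoly KK[n]} 'X_i.
Definition cF (n : nat) (c : KK) : RF n := @FracField.tofrac {mpoly KK[n]} (c%:MP_[n]).
Definition qF (n : nat) : RF n := cF n qK.

Definition Chnk (n k : nat) : RF n :=
  \sum_(i < n) (xF i ^+ k *
     \prod_(j < n | j != i)
        ((qF n * xF i - (qF n)^-1 * xF j) / (xF i - xF j))).

(* Weyl character formula for gl_n, weight lam = sum_i lam i eps_i,
   rho~ = sum_i (n-1-i) eps_i (0-indexed), w(eps_i) = eps_{w i},
   e^{sum a_i eps_i} = prod x_i^{a_i}. *)
Definition ChL (n : nat) (lam : 'I_n -> nat) : RF n :=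
  (\sum_(s : 'S_n) (-1) ^+ s * \prod_(i < n) xF (s i) ^+ (lam i + (n - 1 - i)))
  / \prod_(i < n) \prod_(j < n | (i < j)%N) (xF i - xF j).

(* lambda^i_k = (k-i+1) eps_1 + eps_2 + ... + eps_i (1-indexed i);
   with 0-indexed coordinates j: j = 0 -> k-i+1, 0 < j < i -> 1, else 0. *)
Definition hookw (n k i : nat) : 'I_n -> nat :=
  fun j => if nat_of_ord j == 0%N then (k - i + 1)%N else if (nat_of_ord j < i)%N then 1%N else 0%N.

Definition ChHook (n k i : nat) : RF n :=
  if (i <= k)%N then ChL (@hookw n k i) else 0.

From HB Require Import structures.
From mathcomp Require Import all_boot all_order all_algebra all_fingroup all_field.
From mathcomp Require Import fraction mpoly.
From mathcomp Require Import zify ring.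
Set Implicit Arguments. Unset Strict Implicit. Unset Printing Implicit Defensive.
Import GRing.Theory.
Local Open Scope ring_scope.

(* By the Weyl formula, the character of the hook [(k-p, 1^p)] in [n = m+1]
   variables is an alternant over the Vandermonde product.  Expanding the
   alternant along its first row gives [sum_j (-1)^j x_j^(k+m-p) M_p(x\x_j)],
   where [M_p] is the Vandermonde determinant with the exponent [m-p] skipped.
   The alternating sum over [p] with weights [(q^2)^(m-p)] is the expansion of
   the Vandermonde determinant of [(q^2 x_j, x\x_j)] along its first column,
   i.e. [prod_(l<>j) (q^2 x_j - x_l)] times the Vandermonde of [x\x_j]; divided
   by the full Vandermonde this is the [j]-th summand of [Ch_(n,k)].  Hooks with
   [i > k] have two equal rows in their alternant, matching [ChHook = 0]. *)

Definition vandermonde (F : comNzRingType) n (y : 'I_n -> F) : F :=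
  \prod_(a < n) \prod_(c < n | (a < c)%N) (y a - y c).

Lemma det_vandermonde_desc (F : comNzRingType) n (z : 'I_n -> F) :
  \det (\matrix_(a, c) z c ^+ (n - 1 - a)) = vandermonde z.
Proof.
pose r : 'S_n := perm (@rev_ord_inj n).
pose w : 'rV[F]_n := \row_c z (rev_ord c).
have -> : \matrix_(a, c) z c ^+ (n - 1 - a) =
          row_perm r (col_perm r (Vandermonde n w)).
  apply/matrixP => a c; rewrite !mxE !permE /= rev_ordK; congr (_ ^+ _); lia.
rewrite row_permE col_permE !det_mulmx !det_perm odd_permV det_Vandermonde.
rewrite mulrCA -signr_addb addbb mulr1 (reindex_inj rev_ord_inj) /=.
transitivity (\prod_(a < n) \prod_(c < n | (c < a)%N) (z c - z a)).
  apply: eq_bigr => a _; rewrite (reindex_inj rev_ord_inj) /=.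
  apply: eq_big => [c|c _]; last by rewrite !mxE !rev_ordK.
  have := ltn_ord a; have := ltn_ord c; move=> ? ?; apply/idP/idP; lia.
rewrite [LHS](eq_bigr (fun a : 'I_n =>
  \prod_(c < n) (if (c < a)%N then z c - z a else 1))); last first.
  by move=> a _; rewrite big_mkcond.
by rewrite exchange_big /=; apply: eq_bigr => a _; rewrite [RHS]big_mkcond.
Qed.

Lemma vandermonde_recl (F : comNzRingType) m (z : 'I_m.+1 -> F) :
  vandermonde z =
  \prod_(b < m) (z ord0 - z (lift ord0 b)) * vandermonde (fun b => z (lift ord0 b)).
Proof.
rewrite /vandermonde big_ord_recl; congr (_ * _).
  by rewrite big_mkcond big_ord_recl /= mul1r; apply: eq_bigr => b _.
apply: eq_bigr => a _; rewrite big_mkcond big_ord_recl /= mul1r [RHS]big_mkcond.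
by apply: eq_bigr => c _ /=; rewrite /bump /= ?add1n ltnS.
Qed.

Lemma vandermonde_neq0 (F : idomainType) n (y : 'I_n -> F) :
  (forall i l, i != l -> y i - y l != 0) -> vandermonde y != 0.
Proof.
move=> yinj; apply/prodf_neq0 => a _; apply/prodf_neq0 => c ac.
by apply: yinj; rewrite neq_ltn ac.
Qed.

(* The exponents [m, m-1, ..., 1, 0] with [m - p] removed. *)
Definition skip_exp (m p a : nat) : nat :=
  if (a < p)%N then (m - a)%N else (m.-1 - a)%N.

Definition skip_det (F : comNzRingType) m (p : nat) (y : 'I_m -> F) : F :=
  \det (\matrix_(a < m, b < m) y b ^+ skip_exp m p a).

Lemma minor_vandermonde_desc (F : comNzRingType) m (z : 'I_m.+1 -> F) p j :
  \det (row' p (col' j (\matrix_(a, c) z c ^+ (m.+1 - 1 - a)))) =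
  skip_det p (fun b => z (lift j b)).
Proof.
rewrite /skip_det; congr (\det _); apply/matrixP => a b; rewrite !mxE.
congr (_ ^+ _); rewrite /skip_exp /= /bump; have := ltn_ord a; have := ltn_ord p.
by case: ifP => ?; case: leqP => ?; lia.
Qed.

(* Laplace expansion of the Vandermonde determinant of [(u, y)] along [u]. *)
Lemma skip_det_sum (F : comNzRingType) m (u : F) (y : 'I_m -> F) :
  \sum_(p < m.+1) (-1) ^+ p * u ^+ (m - p) * skip_det p y =
  \prod_(b < m) (u - y b) * vandermonde y.
Proof.
pose z (c : 'I_m.+1) := if unlift ord0 c is Some b then y b else u.
have z0 : z ord0 = u by rewrite /z unlift_none.
have zl b : z (lift ord0 b) = y b by rewrite /z liftK.
have -> : \prod_(b < m) (u - y b) * vandermonde y =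
          \det (\matrix_(a, c) z c ^+ (m.+1 - 1 - a)).
  rewrite det_vandermonde_desc vandermonde_recl z0 /vandermonde; congr (_ * _).
    by apply: eq_bigr => b _; rewrite zl.
  by apply: eq_bigr => a _; apply: eq_bigr => c _; rewrite !zl.
rewrite (expand_det_col _ ord0); apply: eq_bigr => p _.
rewrite !mxE z0 /cofactor addn0 minor_vandermonde_desc.
have -> : (m.+1 - 1 - p = m - p)%N by lia.
rewrite mulrCA mulrA; congr (_ * _); rewrite /skip_det.
by congr (\det _); apply/matrixP => a b; rewrite !mxE zl.
Qed.

Lemma vandermonde_lift (F : comNzRingType) m (x : 'I_m.+1 -> F) (j : 'I_m.+1) :
  vandermonde x = (-1) ^+ j * \prod_(b < m) (x j - x (lift j b)) *
                  vandermonde (fun b => x (lift j b)).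
Proof.
rewrite -det_vandermonde_desc (expand_det_col _ j) -mulrA -skip_det_sum mulr_sumr.
apply: eq_bigr => p _; rewrite !mxE /cofactor exprD minor_vandermonde_desc.
have -> : (m.+1 - 1 - p = m - p)%N by lia.
ring.
Qed.

(* The alternant of a hook: first-row exponent [e], then the skipped exponents. *)
Definition hook_mx (F : comNzRingType) m (e p : nat) (x : 'I_m.+1 -> F) :=
  \matrix_(a < m.+1, c < m.+1) x c ^+ (if nat_of_ord a == 0%N then e else skip_exp m p a.-1).

Lemma det_hook_mx (F : comNzRingType) m (x : 'I_m.+1 -> F) (e p : nat) :
  \det (hook_mx e p x) =
  \sum_(j < m.+1) x j ^+ e * (-1) ^+ j * skip_det p (fun b => x (lift j b)).
Proof.
rewrite (expand_det_row _ ord0); apply: eq_bigr => j _.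
rewrite !mxE /= /cofactor add0n mulrA; congr (_ * _); rewrite /skip_det.
by congr (\det _); apply/matrixP => a b; rewrite !mxE.
Qed.

Lemma det_hook_mx_eq0 (F : comNzRingType) m (x : 'I_m.+1 -> F) (e p r : nat) :
  (r < m)%N -> e = skip_exp m p r -> \det (hook_mx e p x) = 0.
Proof.
move=> rm ->; have r1 : (r.+1 < m.+1)%N by [].
apply: (@determinant_alternate _ _ _ ord0 (Ordinal r1)) => [|c]; first by [].
by rewrite !mxE.
Qed.

Lemma xF_sub_neq0 n (i j : 'I_n) : i != j -> xF i - xF j != 0.
Proof.
move=> hij; rewrite subr_eq0; apply: contra hij => /eqP.
rewrite /xF => /eqP; rewrite tofrac_eq => /eqP hX.
have := congr1 (fun p : {mpoly KK[n]} => p@_U_(i)%MM) hX.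
rewrite /= !mcoeffX eqxx; case: (U_(j) =P U_(i))%MM => [hU _|_ /eqP]; last first.
  by rewrite mulr1n mulr0n oner_eq0.
have := congr1 (fun mm : 'X_{1..n} => mm j) hU; rewrite /= !mnm1E eqxx.
by rewrite eq_sym; case: (j =P i) => // ->.
Qed.

Lemma qF_neq0 n : qF n != 0.
Proof. by rewrite /qF /cF tofrac_eq0 mpolyC_eq0 /qK tofrac_eq0 polyX_eq0. Qed.

Lemma ChL_alternant n (lam : 'I_n -> nat) :
  ChL lam = \det (\matrix_(a, c) xF c ^+ (lam a + (n - 1 - a))) / vandermonde (@xF n).
Proof.
rewrite /ChL /vandermonde; congr (_ / _); rewrite /determinant.
by apply: eq_bigr => s _; congr (_ * _); apply: eq_bigr => i _; rewrite mxE.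
Qed.

(* For [p >= k] the hook character is [0] by convention, and the alternant
   vanishes as well: row [0] repeats row [p - k + 1] (this needs [k >= 1]). *)
Lemma ChHook_alternant m k p : (1 <= k)%N -> (p <= m)%N ->
  ChHook m.+1 k p.+1 =
  \det (hook_mx (k + m - p) p (@xF m.+1)) / vandermonde (@xF m.+1).
Proof.
move=> hk hp; rewrite /ChHook; case: ifP => hpk.
  rewrite ChL_alternant; congr (\det _ / _); apply/matrixP => a c; rewrite !mxE.
  congr (_ ^+ _); rewrite /hookw /skip_exp; have := ltn_ord a.
  by case: eqP => ?; [lia | case: ifP; case: ifP; lia].
rewrite (@det_hook_mx_eq0 _ _ _ _ _ (p - k)) ?mul0r //; first by lia.
by rewrite /skip_exp; case: ifP; lia.
Qed.

Lemma qF_hook_exp m p : (p <= m)%N ->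
  qF m.+1 ^ ((m.+1)%:Z - 2 * (p.+1)%:Z + 1) = (qF m.+1 ^+ 2) ^+ (m - p) / qF m.+1 ^+ m.
Proof.
move=> hp; have -> : ((m.+1)%:Z - 2 * (p.+1)%:Z + 1 = (2 * (m - p))%N%:Z - m%:Z)%R.
  by lia.
by rewrite expfzDr ?qF_neq0 // -exprnN -exprM.
Qed.

Lemma hook_sum_column (F : fieldType) m k (q : F) (x : 'I_m.+1 -> F) (j : 'I_m.+1) :
  q != 0 -> (forall i l, i != l -> x i - x l != 0) ->
  \sum_(p < m.+1) (-1) ^+ p * ((q ^+ 2) ^+ (m - p) / q ^+ m) *
     (x j ^+ (k + m - p) * (-1) ^+ j * skip_det p (fun b => x (lift j b))) /
     vandermonde x
  = x j ^+ k * \prod_(l < m.+1 | l != j) ((q * x j - q^-1 * x l) / (x j - x l)).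
Proof.
move=> q0 xinj; rewrite -mulr_suml.
have -> : \sum_(p < m.+1) (-1) ^+ p * ((q ^+ 2) ^+ (m - p) / q ^+ m) *
            (x j ^+ (k + m - p) * (-1) ^+ j * skip_det p (fun b => x (lift j b)))
   = (-1) ^+ j * x j ^+ k / q ^+ m *
     \sum_(p < m.+1) (-1) ^+ p * (q ^+ 2 * x j) ^+ (m - p) *
                     skip_det p (fun b => x (lift j b)).
  rewrite mulr_sumr; apply: eq_bigr => p _; have hp := ltn_ord p.
  rewrite exprMn (_ : (k + m - p = k + (m - p))%N); last by lia.
  by rewrite exprD exprMn expr2 exprMn; ring.
rewrite skip_det_sum (vandermonde_lift _ j).
rewrite [in RHS]big_mkcond [in RHS](bigD1_ord j) //= eqxx mul1r.
under [in RHS]eq_bigr => b _ do rewrite eq_sym neq_lift.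
rewrite [in RHS]prodf_div.
rewrite [X in _ = _ * (X / _)](eq_bigr (fun b =>
  q^-1 * (q ^+ 2 * x j - x (lift j b)))); last by move=> b _; field.
rewrite prodrMl card_ord.
have P0 : \prod_(b < m) (x j - x (lift j b)) != 0.
  by apply/prodf_neq0 => b _; apply: xinj; rewrite neq_lift.
have V0 : vandermonde (fun b => x (lift j b)) != 0.
  by apply: vandermonde_neq0 => a c ac; apply: xinj; rewrite (inj_eq lift_inj).
have s0 : (-1) ^+ j != 0 :> F by rewrite signr_eq0.
by rewrite exprVn; field; rewrite s0 P0 V0 expf_neq0.
Qed.

Theorem lemma3p3 (n k : nat) (hn : (2 <= n)%N) (hk : (1 <= k)%N) :
  \sum_(1 <= i < n.+1)
     ((-1) ^+ (i - 1) * qF n ^ (n%:Z - 2 * i%:Z + 1) * ChHook n k i)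
  = Chnk n k.
Proof.
case: n hn => [//|m] _.
rewrite big_add1 /= big_mkord.
transitivity (\sum_(j < m.+1) \sum_(p < m.+1)
   (-1) ^+ p * ((qF m.+1 ^+ 2) ^+ (m - p) / qF m.+1 ^+ m) *
   (xF j ^+ (k + m - p) * (-1) ^+ j * skip_det p (fun b => @xF m.+1 (lift j b))) /
   vandermonde (@xF m.+1)).
  rewrite exchange_big; apply: eq_bigr => p _; have hp : (p <= m)%N := ltn_ord p.
  rewrite subn1 /= qF_hook_exp // ChHook_alternant // det_hook_mx.
  by rewrite mulr_suml mulr_sumr; apply: eq_bigr => j _; rewrite !mulrA.
apply: eq_bigr => j _.
exact: (@hook_sum_column (RF m.+1) m k (qF m.+1) (@xF m.+1) j (qF_neq0 _) (@xF_sub_neq0 _)).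
Qed.
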